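(* Let $\alpha=(\alpha_0,\dots,\alpha_5)\in\mathbb{R}^6$ lie in the polytope $\hat P_{II}$ given by \[ -\tfrac12\le\alpha_0<0,\quad \alpha_0<\alpha_r\le1+\alpha_0\ (1\le r\le5),\quad 0\le\alpha_r+\alpha_s\le1\ (1\le r<s\le5), \] \[ 2\alpha_0=\sum_{r>0:\alpha_r+\alpha_0<0}(\alpha_r+\alpha_0),\qquad\sum_{r=0}^5\alpha_r=1. \] For $\zeta=(\zeta_1,\dots,\zeta_n)\in\mathbb{R}^n$ define \[ c(\zeta)=\frac12\sum_{i=1}^n\Big[2\zeta_i^2-2\alpha_0^2+\sum_{r\ge1:\alpha_r<-\alpha_0}(\alpha_r+\alpha_0)^2-\sum_{r\ge1:\alpha_r<-|\zeta_i|}(2\alpha_r^2+2\zeta_i^2)-\sum_{r\ge1:-|\zeta_i|\le\alpha_r<|\zeta_i|}(\alpha_r-|\zeta_i|)^2\Big], \] sums over $1\le r\le5$. Then for $\alpha_0\le\zeta_i\le-\alpha_0$ ($1\le i\le n$) we have $c(\zeta)\le0$, and equality holds only if either $\alpha_r+\alpha_s=0$ for some $1\le r<s\le 5$, or $\zeta_i=\pm\alpha_0$ for all $i$. *)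

From mathcomp Require Import all_boot all_order all_algebra.
From mathcomp Require Import reals.
Set Implicit Arguments. Unset Strict Implicit. Unset Printing Implicit Defensive.
Import Order.TTheory GRing.Theory Num.Theory.
Local Open Scope ring_scope.

(* alpha : 'I_6 -> R, with alpha ord0 = alpha_0, indices r = 1..5 are the
   ordinals r with 0 < r. *)

Definition in_PII (R : realType) (a : 'I_6 -> R) : Prop :=
  -(1/2) <= a ord0 /\ a ord0 < 0 /\
      (forall r : 'I_6, (0 < r)%N -> a ord0 < a r /\ a r <= 1 + a ord0) /\
      (forall r s : 'I_6, (0 < r)%N -> (r < s)%N -> 0 <= a r + a s /\ a r + a s <= 1) /\
      2 * a ord0 = \sum_(r < 6 | (0 < r)%N && (a r + a ord0 < 0)) (a r + a ord0) /\
  \sum_(r < 6) a r = 1.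

Definition cfun (R : realType) (a : 'I_6 -> R) (n : nat) (z : 'I_n -> R) : R :=
  (1/2) * \sum_(i < n)
    ( 2 * z i ^+ 2 - 2 * a ord0 ^+ 2
      + \sum_(r < 6 | (0 < r)%N && (a r < - a ord0)) (a r + a ord0) ^+ 2
      - \sum_(r < 6 | (0 < r)%N && (a r < - `|z i|)) (2 * a r ^+ 2 + 2 * z i ^+ 2)
      - \sum_(r < 6 | (0 < r)%N && (- `|z i| <= a r) && (a r < `|z i|))
          (a r - `|z i|) ^+ 2 ).

From mathcomp Require Import all_boot all_order all_algebra.
From mathcomp Require Import reals ring lra.
Set Implicit Arguments. Unset Strict Implicit. Unset Printing Implicit Defensive.
Import Order.TTheory GRing.Theory Num.Theory.
Local Open Scope ring_scope.

(* Fix [t = |zeta_i|] and let [x_r = max(0, -alpha_0 - alpha_r)] ([deficit]);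
   the x_r are nonnegative, each smaller than [-2 alpha_0], and they sum to
   [-2 alpha_0].  The i-th summand of c(zeta) equals [sum_r k(x_r) - 2 d D],
   where [d = -alpha_0 - t], [D = -alpha_0 + t] and
   [k(x) = x^2 - (x - d)_+^2 - (x - D)_+^2] ([trunc_sq]).  The derivative of k
   is [2 min(x, d, d + D - x)], a concave tent, which makes k superadditive on
   [0, d + D], strictly so on two positive arguments of sum < d + D when d > 0.
   Hence [sum_r k(x_r) <= k(d + D) = 2 d D], and equality with d > 0 forces two
   of the x_r to add up to [d + D], i.e. [alpha_r + alpha_s = 0]. *)

Section TruncatedSquare.

Variable R : realType.

Definition trunc_sq (d D x : R) : R :=
  x ^+ 2 - (if d < x then (x - d) ^+ 2 else 0) - (if D < x then (x - D) ^+ 2 else 0).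

Variables d D : R.

Lemma trunc_sq0 : 0 <= d -> d <= D -> trunc_sq d D 0 = 0.
Proof.
by move=> d0 dD; rewrite /trunc_sq ltNge d0 ltNge (le_trans d0 dD) expr0n !subr0.
Qed.

Lemma trunc_sq_total : 0 <= d -> d <= D -> trunc_sq d D (d + D) = 2 * d * D.
Proof.
move=> d0 dD; rewrite /trunc_sq addrK [d + D]addrC addrK.
case: ltrP => h1; case: ltrP => h2; rewrite ?subr0; first ring.
all: have d_eq0 : d = 0 by lra.
  by rewrite d_eq0; ring.
all: have D_eq0 : D = 0 by lra.
all: by rewrite d_eq0 D_eq0; ring.
Qed.

Lemma trunc_sq_superadd x y : 0 <= d -> d <= D -> 0 <= x -> 0 <= y -> x + y <= d + D ->
  trunc_sq d D x + trunc_sq d D y <= trunc_sq d D (x + y).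
Proof.
move=> d0 dD x0 y0 xy; rewrite /trunc_sq.
case: (ltrP d x) => ?; case: (ltrP D x) => ?; case: (ltrP d y) => ?;
  case: (ltrP D y) => ?; case: (ltrP d (x + y)) => ?; case: (ltrP D (x + y)) => ?; nra.
Qed.

Lemma trunc_sq_superadd_lt x y : 0 < d -> d <= D -> 0 < x -> 0 < y -> x + y < d + D ->
  trunc_sq d D x + trunc_sq d D y < trunc_sq d D (x + y).
Proof.
move=> d0 dD x0 y0 xy; rewrite /trunc_sq.
case: (ltrP d x) => ?; case: (ltrP D x) => ?; case: (ltrP d y) => ?;
  case: (ltrP D y) => ?; case: (ltrP d (x + y)) => ?; case: (ltrP D (x + y)) => ?; nra.
Qed.

Lemma trunc_sq_sum_le (I : Type) (r : seq I) (P : pred I) (x : I -> R) :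
  0 <= d -> d <= D -> (forall i, P i -> 0 <= x i) -> \sum_(i <- r | P i) x i <= d + D ->
  \sum_(i <- r | P i) trunc_sq d D (x i) <= trunc_sq d D (\sum_(i <- r | P i) x i).
Proof.
move=> d0 dD x_ge0; elim: r => [|i r IHr]; first by rewrite !big_nil trunc_sq0.
rewrite !big_cons; case: ifP => // Pi le_sum.
have sum_ge0 : 0 <= \sum_(j <- r | P j) x j by exact: sumr_ge0.
apply: le_trans (trunc_sq_superadd d0 dD (x_ge0 i Pi) sum_ge0 le_sum).
by rewrite lerD2l IHr // (le_trans _ le_sum) // lerDr x_ge0.
Qed.

Variables (I : finType) (P : pred I) (x : I -> R).

Lemma trunc_sq_sum_le_total : 0 <= d -> d <= D ->
  (forall i, P i -> 0 <= x i) -> \sum_(i | P i) x i = d + D ->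
  \sum_(i | P i) trunc_sq d D (x i) <= 2 * d * D.
Proof.
by move=> d0 dD x_ge0 sum_x; rewrite -trunc_sq_total // -sum_x trunc_sq_sum_le // sum_x.
Qed.

Lemma trunc_sq_sum_eq_total : 0 < d -> d <= D ->
  (forall i, P i -> 0 <= x i < d + D) -> \sum_(i | P i) x i = d + D ->
  \sum_(i | P i) trunc_sq d D (x i) = 2 * d * D ->
  exists i j, [/\ P i, P j, i != j & x i + x j = d + D].
Proof.
move=> d_gt0 dD x_bnd sum_x sum_eq.
have x_ge0 i : P i -> 0 <= x i by move/x_bnd/andP=> [].
have [i /andP[Pi xi_gt0]] : exists i, P i && (0 < x i).
  by apply: psumr_neq0P => //; rewrite sum_x; lra.
have sum_xi : x i + \sum_(j | P j && (j != i)) x j = d + D by rewrite -bigD1.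
have [j /andP[/andP[Pj ji] xj_gt0]] : exists j, (P j && (j != i)) && (0 < x j).
  apply: psumr_neq0P => [j /andP[/x_ge0]|] //.
  by have /andP[_ xi_lt] := x_bnd i Pi; lra.
exists i, j; split; rewrite 1?eq_sym //.
pose rest := \sum_(l | P l && (l != i) && (l != j)) x l.
have sum_xij : x i + x j + rest = d + D by rewrite -addrA -(bigD1 j) //= Pj.
have rest_ge0 : 0 <= rest by apply: sumr_ge0 => l /andP[/andP[/x_ge0]].
have xij_le : x i + x j <= d + D by rewrite -sum_xij lerDl.
apply/eqP; rewrite eq_le xij_le /= leNgt; apply/negP => xij_lt.
move: sum_eq; rewrite (bigD1 i) //= (bigD1 j) /= ?Pj // addrA => sum_eq.
have rest_le : \sum_(l | P l && (l != i) && (l != j)) trunc_sq d D (x l)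
               <= trunc_sq d D rest.
  apply: trunc_sq_sum_le => [|//|l /andP[/andP[/x_ge0]] //|]; first exact: ltW.
  by rewrite -/rest; lra.
have := trunc_sq_superadd_lt d_gt0 dD xi_gt0 xj_gt0 xij_lt.
have sum_le : x i + x j + rest <= d + D by rewrite sum_xij.
have := trunc_sq_superadd (ltW d_gt0) dD (addr_ge0 (ltW xi_gt0) (ltW xj_gt0)) rest_ge0 sum_le.
by rewrite sum_xij trunc_sq_total ?(ltW d_gt0) //; lra.
Qed.

End TruncatedSquare.

Section PolytopePII.

Variable R : realType.
Implicit Types (a : 'I_6 -> R) (t : R).

Definition cfun_term a t : R :=
  2 * t ^+ 2 - 2 * a ord0 ^+ 2
  + \sum_(r < 6 | (0 < r)%N && (a r < - a ord0)) (a r + a ord0) ^+ 2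
  - \sum_(r < 6 | (0 < r)%N && (a r < - `|t|)) (2 * a r ^+ 2 + 2 * t ^+ 2)
  - \sum_(r < 6 | (0 < r)%N && (- `|t| <= a r) && (a r < `|t|)) (a r - `|t|) ^+ 2.

Lemma cfunE a n (z : 'I_n -> R) : cfun a z = 1 / 2 * \sum_(i < n) cfun_term a (z i).
Proof. by []. Qed.

Definition deficit a (r : 'I_6) : R := if a r < - a ord0 then - a ord0 - a r else 0.

Lemma summands_trunc_sq (a0 ar t : R) : a0 < ar -> 0 <= t -> t <= - a0 ->
  (if ar < - a0 then (ar + a0) ^+ 2 else 0)
  - (if ar < - t then 2 * ar ^+ 2 + 2 * t ^+ 2 else 0)
  - (if - t <= ar then if ar < t then (ar - t) ^+ 2 else 0 else 0)
  = trunc_sq (- a0 - t) (- a0 + t) (if ar < - a0 then - a0 - ar else 0).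
Proof.
move=> a0_lt t_ge0 t_le; rewrite /trunc_sq.
by repeat (case: ifPn; [move=> ? | rewrite -?leNgt -?ltNge => ?]); nra.
Qed.

Lemma cfun_term_trunc_sq a t : (forall r : 'I_6, (0 < r)%N -> a ord0 < a r) ->
  `|t| <= - a ord0 ->
  cfun_term a t = \sum_(r < 6 | (0 < r)%N)
      trunc_sq (- a ord0 - `|t|) (- a ord0 + `|t|) (deficit a r)
    - 2 * (- a ord0 - `|t|) * (- a ord0 + `|t|).
Proof.
move=> a_gt t_le; rewrite /cfun_term -[t ^+ 2](real_normK (num_real t)) !big_mkcondr.
under [X in _ = X - _]eq_bigr => r r_gt0 do rewrite -summands_trunc_sq ?a_gt //.
by rewrite !sumrB; ring.
Qed.

Lemma sum_deficit a : in_PII a -> \sum_(r < 6 | (0 < r)%N) deficit a r = - (2 * a ord0).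
Proof.
move=> [_ [_ [_ [_ [sum_neg _]]]]].
rewrite sum_neg /deficit -big_mkcondr -sumrN; apply: eq_big => r.
  by congr andb; apply/idP/idP => ?; lra.
by move=> _; rewrite opprD addrC.
Qed.

Lemma cfun_term_le0 a t : in_PII a -> `|t| <= - a ord0 ->
  cfun_term a t <= 0 /\
  (cfun_term a t = 0 ->
     (exists r s : 'I_6, [/\ (0 < r)%N, (r < s)%N & a r + a s = 0]) \/ `|t| = - a ord0).
Proof.
move=> aP t_le; have [_ [a0_lt0 [a_bnd _]]] := aP.
have a_gt (r : 'I_6) : (0 < r)%N -> a ord0 < a r by move/a_bnd=> [].
rewrite cfun_term_trunc_sq //.
set d := - a ord0 - `|t|; set D := - a ord0 + `|t|.
have d_ge0 : 0 <= d by rewrite /d; lra.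
have dD : d <= D by rewrite /d /D; have := normr_ge0 t; lra.
have sum_d : \sum_(r < 6 | (0 < r)%N) deficit a r = d + D.
  by rewrite sum_deficit // /d /D; lra.
have deficit_bnd (r : 'I_6) : (0 < r)%N -> 0 <= deficit a r < d + D.
  move/a_gt; rewrite /deficit /d /D; case: ifPn => ? ?; apply/andP; split; lra.
have deficit_ge0 (r : 'I_6) : (0 < r)%N -> 0 <= deficit a r by move/deficit_bnd/andP=> [].
have := trunc_sq_sum_le_total d_ge0 dD deficit_ge0 sum_d.
split=> [|term0]; first lra.
have [d_gt0|] := ltrP 0 d; last by rewrite /d => d_le0; right; lra.
left; have [|i [j [i_gt0 j_gt0 ij sum_ij]]] := trunc_sq_sum_eq_total d_gt0 dD deficit_bnd sum_d.
  lra.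
have [ai aj] : a i < - a ord0 /\ a j < - a ord0.
  move: sum_ij; have := a_gt i i_gt0; have := a_gt j j_gt0.
  by rewrite /deficit /d /D; case: ifP; case: ifP; lra.
have aij : a i + a j = 0 by move: sum_ij; rewrite /deficit ai aj /d /D; lra.
case: (ltngtP i j) => [lt_ij|lt_ji|/val_inj eq_ij]; last by rewrite eq_ij eqxx in ij.
- by exists i, j.
- by exists j, i; rewrite addrC.
Qed.

End PolytopePII.

Theorem lemmaA5 (R : realType) (a : 'I_6 -> R) (n : nat) (z : 'I_n -> R) :
  in_PII a ->
  (forall i : 'I_n, a ord0 <= z i /\ z i <= - a ord0) ->
  cfun a z <= 0 /\
  (cfun a z = 0 ->
     (exists r s : 'I_6, [/\ (0 < r)%N, (r < s)%N & a r + a s = 0])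
     \/ (forall i : 'I_n, z i = a ord0 \/ z i = - a ord0)).
Proof.
move=> aP z_bnd.
have z_le i : `|z i| <= - a ord0 by rewrite ler_norml opprK; apply/andP; exact: z_bnd.
have term_le0 i : cfun_term a (z i) <= 0 by have [] := cfun_term_le0 aP (z_le i).
have sum_le0 : \sum_(i < n) cfun_term a (z i) <= 0 by exact: sumr_le0.
rewrite cfunE; split=> [|c0]; first lra.
have term0 i : cfun_term a (z i) = 0.
  have sum0 : \sum_(i < n) - cfun_term a (z i) = 0 by rewrite sumrN; lra.
  by apply/oppr_inj; rewrite oppr0 (psumr_eq0P _ sum0) // => j _; rewrite oppr_ge0.
have [i z_lt|z_eq] := pickP (fun i => `|z i| != - a ord0).
  by have [_ /(_ (term0 i)) [|/eqP]] := cfun_term_le0 aP (z_le i); [left | rewrite (negPf z_lt)].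
right=> i; have /negbFE := z_eq i; rewrite eqr_norml opprK => /andP[/orP[]/eqP]; auto.
Qed.
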